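(* In any execution of the algorithm described in the context, all non-faulty processes that decide decide the same value; i.e., no two non-faulty processes decide different values.
   Context: Model. There are $n$ processes $p_1,\dots,p_n$ ($i$ is the index of $p_i$) communicating over an asynchronous, reliable, point-to-point network: every pair of processes is connected by a channel, message delays are finite but unbounded, and the network does not lose, duplicate, modify or create messages. ''Broadcast'' means sending the message to every process (including oneself). Messages are signed with unforgeable digital signatures ($\langle m\rangle_j$ denotes message $m$ signed by $p_j$); malformed messages or messages with invalid signatures are ignored. Up to $t$ processes are Byzantine (faulty) and may behave arbitrarily and collude, but cannot forge signatures of other processes; the remaining processes are non-faulty and follow the algorithm. It is assumed that $t<n/3$. Algorithm. Messages are of the form $\mathrm{AUX}[r](v)$ with round $r\in\mathbb{N}$ and $v\in\{0,1\}$, sent as a pair $(\langle \mathrm{AUX}[r](v)\rangle_j,\mathit{proofs})$ where $\mathit{proofs}$ is a set of signed AUX messages. The predicate $\mathsf{is\_valid}(r,est,\mathit{proofs})$ is: if $r=0$ return true; if $r=1$ return true iff $\mathit{proofs}$ contains signed $\mathrm{AUX}[0](est)$ messages from $t+1$ different processes; otherwise let $b=(r-1)\bmod 2$; if $est=b$, return true iff ($r=2$ and $\mathit{proofs}$ contains signed $\mathrm{AUX}[0](b)$ from $t+1$ different processes) or ($\mathit{proofs}$ contains signed $\mathrm{AUX}[r-2](b)$ from $n-t$ different processes); if $est\neq b$, return true iff $\mathit{proofs}$ contains signed $\mathrm{AUX}[r-1](\neg b)$ from $n-t$ different processes. Each process $p_i$ with proposal $v_i$ keeps a round counter $r_i$,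 a set $\mathit{aux\_values}_i$ of signed AUX messages, and timers indexed by naturals (timers $2r$ and $2r+1$ belong to round $r$; starting an already started or expired timer does nothing). It sets $r_i:=0$, $\mathit{aux\_values}_i:=\emptyset$, broadcasts $(\langle\mathrm{AUX}[0](v_i)\rangle_i,\emptyset)$, then repeats forever: (1) $r_i:=r_i+1$; (2) if $i=r_i\bmod n$ (coordinator), run Broadcast; (3) start timer $2r_i$ and wait until it expires; (4) if $i\ne r_i\bmod n$, run Broadcast; (5) wait until $\mathit{aux\_values}_i$ contains round-$r_i$ AUX messages from $n-t$ different processes; (6) start timer $2r_i+1$ and wait until it expires; (7) with $b_i=r_i\bmod 2$, if $\mathit{aux\_values}_i$ contains $\mathrm{AUX}[r_i](b_i)$ from $n-t$ different processes, decide $b_i$ (if not yet decided); a process decides in round $r$ if it decides at this step with $r_i=r$. Broadcast: let $\mathit{values}_i$ be the set of $v\in\{0,1\}$ such that $\mathsf{is\_valid}(r_i,v,S)$ holds for some $S\subseteq\mathit{aux\_values}_i$; let $bv=(r_i+1)\bmod 2$; if $p_i$ received from $p_{r_i\bmod n}$ a message $(\langle\mathrm{AUX}[r_i](p)\rangle_{r_i\bmod n},\cdot)$ with $p\in\mathit{values}_i$ then $est_i:=p$, else if $bv\in\mathit{values}_i$ then $est_i:=bv$, else $est_i:=\neg bv$; choose $\mathit{proofs}\subseteq\mathit{aux\_values}_i$ with $\mathsf{is\_valid}(r_i,est_i,\mathit{proofs})$ and broadcast $(\langle\mathrm{AUX}[r_i](est_i)\rangle_i,\mathit{proofs})$. On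 receiving $(\langle\mathrm{AUX}[r_j](est_j)\rangle_j,\mathit{proofs})$: if $\mathsf{is\_valid}(r_j,est_j,\mathit{proofs})$, add the signed message and the messages of $\mathit{proofs}$ needed to satisfy the predicate to $\mathit{aux\_values}_i$ (such messages are called valid). Then let $\rho_i$ be the largest round for which $\mathit{aux\_values}_i$ contains messages from $t+1$ different processes, and set every timer with index $\le 2\rho_i$ to expired. *)

From mathcomp Require Import all_boot.
Set Implicit Arguments. Unset Strict Implicit. Unset Printing Implicit Defensive.

Section Model.
Variables (n t : nat) (F : {set 'I_n}) (prop : 'I_n -> bool).
(* Process p_k is represented by i : 'I_n with k = i.+1 (indices 1..n).
   F is the set of Byzantine processes; prop i is the proposal of i.
   Binary values 0/1 are represented by false/true. *)

(* signed message <AUX[r](v)>_j  represented as (r, v, j) *)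
Definition sm := (nat * bool * 'I_n)%type.

Definition nb_from (S : seq sm) (r : nat) (v : bool) : nat :=
  #|[set j : 'I_n | (r, v, j) \in S]|.

Definition nb_round (S : seq sm) (r : nat) : nat :=
  #|[set j : 'I_n | ((r, false, j) \in S) || ((r, true, j) \in S)]|.

Definition is_valid (r : nat) (est : bool) (proofs : seq sm) : bool :=
  if r == 0 then true
  else if r == 1 then t.+1 <= nb_from proofs 0 est
  else let b := odd (r - 1) in
    if est == b then
      ((r == 2) && (t.+1 <= nb_from proofs 0 b)) || (n - t <= nb_from proofs (r - 2) b)
    else n - t <= nb_from proofs (r - 1) (~~ b).

Definition is_coord (i : 'I_n) (r : nat) : bool := (i.+1 == r %% n).

Inductive tstate := TNotStarted | TRunning | TExpired.

(* program counter of the main loop: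
   PInit  : before the initial broadcast of AUX[0](v_i)
   PBegin : about to execute steps (1)-(3 start)
   PWaitT0: waiting for timer 2r (step 3), then step (4)
   PWaitQ : step (5)
   PWaitT1: waiting for timer 2r+1 (step 6), then step (7) *)
Inductive phase := PInit | PBegin | PWaitT0 | PWaitQ | PWaitT1.

Record pstate := PState {
  rnd : nat;
  ph : phase;
  aux : seq sm;
  timers : nat -> tstate;
  recvd : seq ('I_n * sm);           (* (channel sender, signed message) of every received message *)
  decided : option bool }.

Record packet := Packet { src : 'I_n; dst : 'I_n; psig : sm; pproofs : seq sm }.

Record world := World {
  procs : 'I_n -> pstate;
  net : seq packet;
  signed : seq sm }.                 (* signatures produced by non-faulty processes *)

Definition upd (f : 'I_n -> pstate) (i : 'I_n) (s : pstate) : 'I_n -> pstate :=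
  fun j => if j == i then s else f j.

Definition start_timer (tm : nat -> tstate) (k : nat) : nat -> tstate :=
  fun k' => if k' == k then (if tm k is TNotStarted then TRunning else tm k) else tm k'.

Definition expire (A : seq sm) (tm : nat -> tstate) : nat -> tstate :=
  fun k => if has (fun x : sm => (t.+1 <= nb_round A x.1.1) && (k <= 2 * x.1.1)) A
           then TExpired else tm k.

Definition bcast_pkts (i : 'I_n) (s : sm) (proofs : seq sm) : seq packet :=
  [seq Packet i j s proofs | j <- enum 'I_n].

Definition in_values (A : seq sm) (r : nat) (v : bool) : Prop :=
  exists S : seq sm, {subset S <= A} /\ is_valid r v S.

Definition coord_proposes (st : pstate) (r : nat) (p : bool) : Prop :=
  exists c : 'I_n, is_coord c r /\ (c, (r, p, c)) \in recvd st /\ in_values (aux st) r p.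

Definition bcast_choice (st : pstate) (r : nat) (est : bool) (proofs : seq sm) : Prop :=
  let bv := odd r.+1 in
  (coord_proposes st r est \/
   ((~ exists p, coord_proposes st r p) /\
    ((in_values (aux st) r bv /\ est = bv) \/ (~ in_values (aux st) r bv /\ est = ~~ bv))))
  /\ {subset proofs <= aux st} /\ is_valid r est proofs.

Inductive step : world -> world -> Prop :=
| st_init w i st :
    i \notin F -> procs w i = st -> ph st = PInit ->
    step w (World (upd (procs w) i
                 (PState 0 PBegin (aux st) (timers st) (recvd st) (decided st)))
             (net w ++ bcast_pkts i (0, prop i, i) [::])
             ((0, prop i, i) :: signed w))
| st_begin_coord w i st est proofs :
    i \notin F -> procs w i = st -> ph st = PBegin -> is_coord i (rnd st).+1 ->
    bcast_choice st (rnd st).+1 est proofs ->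
    step w (World (upd (procs w) i
                 (PState (rnd st).+1 PWaitT0 (aux st)
                    (start_timer (timers st) (2 * (rnd st).+1)) (recvd st) (decided st)))
             (net w ++ bcast_pkts i ((rnd st).+1, est, i) proofs)
             (((rnd st).+1, est, i) :: signed w))
| st_begin_other w i st :
    i \notin F -> procs w i = st -> ph st = PBegin -> ~~ is_coord i (rnd st).+1 ->
    step w (World (upd (procs w) i
                 (PState (rnd st).+1 PWaitT0 (aux st)
                    (start_timer (timers st) (2 * (rnd st).+1)) (recvd st) (decided st)))
             (net w) (signed w))
| st_t0_coord w i st :
    i \notin F -> procs w i = st -> ph st = PWaitT0 -> timers st (2 * rnd st) = TExpired ->
    is_coord i (rnd st) ->
    step w (World (upd (procs w) i
                 (PState (rnd st) PWaitQ (aux st) (timers st) (recvd st) (decided st)))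
             (net w) (signed w))
| st_t0_other w i st est proofs :
    i \notin F -> procs w i = st -> ph st = PWaitT0 -> timers st (2 * rnd st) = TExpired ->
    ~~ is_coord i (rnd st) ->
    bcast_choice st (rnd st) est proofs ->
    step w (World (upd (procs w) i
                 (PState (rnd st) PWaitQ (aux st) (timers st) (recvd st) (decided st)))
             (net w ++ bcast_pkts i (rnd st, est, i) proofs)
             ((rnd st, est, i) :: signed w))
| st_quorum w i st :
    i \notin F -> procs w i = st -> ph st = PWaitQ -> n - t <= nb_round (aux st) (rnd st) ->
    step w (World (upd (procs w) i
                 (PState (rnd st) PWaitT1 (aux st)
                    (start_timer (timers st) (2 * rnd st).+1) (recvd st) (decided st)))
             (net w) (signed w))
| st_t1 w i st :
    i \notin F -> procs w i = st -> ph st = PWaitT1 -> timers st (2 * rnd st).+1 = TExpired ->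
    let b := odd (rnd st) in
    let d := if decided st is Some _ then decided st
             else if n - t <= nb_from (aux st) (rnd st) b then Some b else None in
    step w (World (upd (procs w) i
                 (PState (rnd st) PBegin (aux st) (timers st) (recvd st) d))
             (net w) (signed w))
(* a running timer expires (timer durations are arbitrary) *)
| st_timer w i st k :
    procs w i = st -> timers st k = TRunning ->
    step w (World (upd (procs w) i
                 (PState (rnd st) (ph st) (aux st)
                    (fun k' => if k' == k then TExpired else timers st k')
                    (recvd st) (decided st)))
             (net w) (signed w))
| st_deliver_valid w n1 n2 p st S :
    net w = n1 ++ p :: n2 -> dst p \notin F -> procs w (dst p) = st ->
    is_valid (psig p).1.1 (psig p).1.2 (pproofs p) ->
    {subset S <= pproofs p} -> is_valid (psig p).1.1 (psig p).1.2 S ->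
    let A := psig p :: S ++ aux st in
    step w (World (upd (procs w) (dst p)
                 (PState (rnd st) (ph st) A (expire A (timers st))
                    ((src p, psig p) :: recvd st) (decided st)))
             (n1 ++ n2) (signed w))
| st_deliver_invalid w n1 n2 p st :
    net w = n1 ++ p :: n2 -> dst p \notin F -> procs w (dst p) = st ->
    ~~ is_valid (psig p).1.1 (psig p).1.2 (pproofs p) ->
    step w (World (upd (procs w) (dst p)
                 (PState (rnd st) (ph st) (aux st) (expire (aux st) (timers st))
                    ((src p, psig p) :: recvd st) (decided st)))
             (n1 ++ n2) (signed w))
| st_deliver_faulty w n1 n2 p :
    net w = n1 ++ p :: n2 -> dst p \in F ->
    step w (World (procs w) (n1 ++ n2) (signed w))
(* a Byzantine process sends an arbitrary message; it cannot forge
   signatures of non-faulty processes *)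
| st_byz w k d s proofs :
    k \in F ->
    (forall x, x \in s :: proofs -> x.2 \in F \/ x \in signed w) ->
    step w (World (procs w) (net w ++ [:: Packet k d s proofs]) (signed w)).

Definition init_world : world :=
  World (fun _ => PState 0 PInit [::] (fun _ => TNotStarted) [::] None) [::] [::].

Inductive reachable : world -> Prop :=
| reach_init : reachable init_world
| reach_step w w' : reachable w -> step w w' -> reachable w'.

End Model.

(* A round r is decisive when n - t processes (counting all Byzantine ones)
   signed AUX[r](b) with b = r mod 2; a correct process decides b in round r only
   after seeing such signatures. A valid AUX[k](v) carries n - t signatures of
   AUX[k-1](v) when v = k mod 2 and of AUX[k-2](v) otherwise (the round-0
   exception for k = 2 only concerns v = 1, the decision value of round 1).
   Hence, by induction on k >= r, after a decisive round r fewer than n - t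
   processes ever sign AUX[k](~b): for k = r, two quorums of size n - t share
   more than t processes, hence a correct one, which signs only one value per
   round; for k > r, a correct signer of AUX[k](~b) would need a quorum for ~b
   in round k-1 or k-2, which is again >= r. So no later round is decisive for
   ~b. The operational part is an invariant of reachable worlds: signatures in
   transit or in aux sets are authentic, correct processes sign each round once
   and only with valid proofs, and every decision comes from a decisive round. *)

From mathcomp Require Import all_boot zify.
Set Implicit Arguments. Unset Strict Implicit. Unset Printing Implicit Defensive.

Section Signatures.
Variables (n t : nat) (F : {set 'I_n}).

Definition authentic (S : seq (sm n)) : pred (sm n) := fun x => (x.2 \in F) || (x \in S).

Definition signers (S : seq (sm n)) r v : {set 'I_n} :=
  [set j | (j \in F) || ((r, v, j) \in S)].

Definition quorum (S : seq (sm n)) r v : bool := n - t <= #|signers S r v|.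

Definition decisive (S : seq (sm n)) r : bool := (0 < r) && quorum S r (odd r).

Definition uniq_signatures (S : seq (sm n)) : Prop :=
  forall j k v v', j \notin F -> (k, v, j) \in S -> (k, v', j) \in S -> v = v'.

Definition justified_signatures (S : seq (sm n)) : Prop :=
  forall j k v, j \notin F -> (k, v, j) \in S -> 0 < k ->
    exists2 pr, is_valid t k v pr & {subset pr <= authentic S}.

Lemma authentic_mono S S' : {subset S <= S'} -> {subset authentic S <= authentic S'}.
Proof. by move=> sub x /orP [xF | /sub xS']; apply/orP; [left | right]. Qed.

Lemma quorum_mono S S' r v : {subset S <= S'} -> quorum S r v -> quorum S' r v.
Proof.
move=> sub /leq_trans; apply; apply/subset_leq_card/subsetP => j; rewrite !inE.
by case/orP => [-> // | /sub ->]; rewrite orbT.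
Qed.

Lemma nb_from_le_signers S pr r v :
  {subset pr <= authentic S} -> nb_from pr r v <= #|signers S r v|.
Proof.
by move=> auth; apply/subset_leq_card/subsetP => j; rewrite !inE => /auth.
Qed.

Lemma valid_quorum S k v pr : is_valid t k.+2 v pr -> {subset pr <= authentic S} ->
  if v == odd k then quorum S k.+1 v else (k == 0) || quorum S k v.
Proof.
move=> + /nb_from_le_signers le; rewrite /is_valid /= !subSS !subn0 /quorum.
case: (odd k); case: v => /=; try by move/leq_trans; apply.
all: by case/orP => [/andP [/eqP [->]] | /leq_trans ->]; rewrite ?orbT.
Qed.

Section Agreement.
Variable S : seq (sm n).
Hypotheses (t_lt : 3 * t < n) (F_le : #|F| <= t).
Hypotheses (S_uniq : uniq_signatures S) (S_just : justified_signatures S).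

Lemma quorum_excl r v : quorum S r v -> ~~ quorum S r (~~ v).
Proof.
move=> qv; apply/negP => qnv.
have: ~~ (signers S r v :&: signers S r (~~ v) \subset F).
  apply/negP => /subset_leq_card; have := cardsUI (signers S r v) (signers S r (~~ v)).
  have := max_card (signers S r v :|: signers S r (~~ v)).
  by rewrite card_ord; move: qv qnv; rewrite /quorum; lia.
case/subsetPn => j; rewrite !inE => /andP [sv snv] jF.
rewrite (negbTE jF) /= in sv snv.
by have := S_uniq jF sv snv; case: (v).
Qed.

Lemma no_quorum_against r k : decisive S r -> r <= k -> ~~ quorum S k (~~ odd r).
Proof.
case/andP => r_gt0 qr; elim/ltn_ind: k => k IH.
case: (ltngtP r k) => // [r_lt_k _ | <- _]; last exact: quorum_excl.
suff: signers S k (~~ odd r) \subset F by move/subset_leq_card; rewrite /quorum; lia.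
apply/subsetP => j; rewrite inE => /orP [// | sig_j]; apply/negPn/negP => jF.
have [pr valid auth] := S_just jF sig_j (leq_trans r_gt0 (ltnW r_lt_k)).
have k_gt1 : 1 < k by lia.
case: k k_gt1 IH r_lt_k {sig_j} valid => [|[|k]] // _ IH r_lt_k valid.
case: ifP (valid_quorum valid auth) => [_ | par].
  by apply/negP; apply: IH; lia.
have same_par : odd r = odd k by move/negbT: par; case: (odd r); case: (odd k).
case/orP => [/eqP k0 | ].
  have r1 : r = 1 by lia.
  by move: same_par; rewrite r1 k0.
have r_ne : r != k.+1 by apply/eqP => r_eq; move: same_par; rewrite r_eq /=; case: (odd k).
by apply/negP; apply: IH; lia.
Qed.

Lemma decisive_agree r1 r2 : decisive S r1 -> decisive S r2 -> odd r1 = odd r2.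
Proof.
wlog le_r12 : r1 r2 / r1 <= r2 => [wlog_le | d1 /andP [_ q2]].
  by case: (leqP r1 r2) => [|/ltnW] le d1 d2; [|symmetry]; apply: wlog_le.
apply/eqP; apply: contraTT q2 => ne.
have -> : odd r2 = ~~ odd r1 by move: ne; case: (odd r1); case: (odd r2).
exact: no_quorum_against d1 le_r12.
Qed.

End Agreement.
End Signatures.

Section Invariant.
Variables (n t : nat) (F : {set 'I_n}) (prop : 'I_n -> bool).

Local Notation authentic := (authentic F).
Local Notation decisive := (decisive t F).

(* The first round in which i has not signed yet: a non-coordinator signs its
   round-r estimate only when it leaves PWaitT0. *)
Definition next_sign_round (i : 'I_n) (s : pstate n) : nat :=
  match ph s with
  | PInit => 0
  | PWaitT0 => if is_coord i (rnd s) then (rnd s).+1 else rnd s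
  | _ => (rnd s).+1
  end.

Definition mid_round (s : pstate n) : bool :=
  if ph s is (PInit | PBegin) then false else true.

Definition decision_ok (S : seq (sm n)) (d : option bool) : Prop :=
  forall a, d = Some a -> exists2 r, decisive S r & a = odd r.

Definition packet_ok (S : seq (sm n)) (p : packet n) : bool :=
  authentic S (psig p) && all (authentic S) (pproofs p).

Record proc_ok (S : seq (sm n)) (s : pstate n) : Prop := ProcOk {
  aux_authentic : {subset aux s <= authentic S};
  mid_round_pos : mid_round s -> 0 < rnd s;
  decision_backed : decision_ok S (decided s) }.

Record invariant (w : world n) : Prop := Invariant {
  procs_ok : forall i, proc_ok (signed w) (procs w i);
  net_ok : all (packet_ok (signed w)) (net w);
  signed_before_next : forall j k v, j \notin F -> (k, v, j) \in signed w ->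
    k < next_sign_round j (procs w j);
  signed_uniq : uniq_signatures F (signed w);
  signed_justified : justified_signatures t F (signed w) }.

Lemma proc_ok_mono S S' s : {subset S <= S'} -> proc_ok S s -> proc_ok S' s.
Proof.
move=> sub [auth pos dec]; split => // [x /auth | a /dec [r d ->]].
  exact: authentic_mono.
by exists r; rewrite // /decisive; case/andP: d => -> /(quorum_mono sub).
Qed.

Lemma packet_ok_mono S S' p : {subset S <= S'} -> packet_ok S p -> packet_ok S' p.
Proof.
move=> sub /andP [sig prf]; apply/andP; split; first exact: authentic_mono sig.
by apply: sub_all prf => x; apply: authentic_mono.
Qed.

Lemma invariant_init : invariant (init_world n).
Proof. by split=> //= i; split. Qed.

Lemma invariant_net w N :
  invariant w -> all (packet_ok (signed w)) N -> invariant (World (procs w) N (signed w)).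
Proof. by case. Qed.

Lemma invariant_local w i s' N :
  invariant w -> proc_ok (signed w) s' ->
  next_sign_round i (procs w i) <= next_sign_round i s' ->
  all (packet_ok (signed w)) N ->
  invariant (World (upd (procs w) i s') N (signed w)).
Proof.
case=> P _ before Su Sj ok_s' next_le N_ok; split => //= [j | j k v jF].
  by rewrite /upd; case: ifP.
move: jF; rewrite /upd; case: (j =P i) => [-> iF | _]; last exact: before.
by move=> /(before _ _ _ iF) /leq_trans; apply.
Qed.

Lemma invariant_sign w i s' r v pr :
  invariant w -> i \notin F ->
  next_sign_round i (procs w i) = r -> next_sign_round i s' = r.+1 ->
  (0 < r -> is_valid t r v pr) -> {subset pr <= authentic (signed w)} ->
  proc_ok (signed w) s' ->
  invariant (World (upd (procs w) i s') (net w ++ bcast_pkts i (r, v, i) pr)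
                   ((r, v, i) :: signed w)).
Proof.
case=> P N_ok before Su Sj iF next_r next_s' valid auth ok_s'.
have sub : {subset signed w <= (r, v, i) :: signed w}.
  by move=> x x_in; rewrite in_cons x_in orbT.
have fresh k v' : (k, v', i) \in signed w -> k < r.
  by move=> /(before _ _ _ iF); rewrite next_r.
split => /=.
- by move=> j; apply: proc_ok_mono sub _; rewrite /upd; case: ifP.
- rewrite all_cat (sub_all _ N_ok) => [|p]; last exact: packet_ok_mono.
  rewrite all_map; apply/allP => j _ /=; rewrite /packet_ok /= /authentic mem_head orbT.
  by apply/allP => x /auth; apply: authentic_mono.
- move=> j k v'; rewrite in_cons /upd; case: (j =P i) => [-> _ | ne jF].
    by rewrite next_s' ltnS => /orP [/eqP [-> _] // | /fresh /ltnW].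
  by case/orP => [/eqP [_ _ /ne] // | ]; apply: before.
- move=> j k v1 v2 jF; rewrite !in_cons.
  case/orP => [/eqP [-> -> ->] | s1].
    by case/orP => [/eqP [->] // | /fresh]; rewrite ltnn.
  case/orP => [/eqP [k_r _ j_i] | s2]; last exact: Su s1 s2.
  by move: s1; rewrite k_r j_i => /fresh; rewrite ltnn.
- move=> j k v' jF; rewrite in_cons => /orP [/eqP [-> -> _] /valid | /(Sj _ _ _ jF) just].
    by exists pr => // x /auth; apply: authentic_mono.
  by case/just=> pr' ? auth'; exists pr' => // x /auth'; apply: authentic_mono.
Qed.

Lemma decision_ok_decide S s : proc_ok S s -> mid_round s ->
  decision_ok S (if decided s is Some _ then decided s
                 else if n - t <= nb_from (aux s) (rnd s) (odd (rnd s))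
                      then Some (odd (rnd s)) else None).
Proof.
case=> auth pos dec mid; case E: (decided s) => [a|]; first by rewrite -E.
case: ifP => // q a [<-]; exists (rnd s) => //.
by rewrite /decisive pos //=; exact: leq_trans q (nb_from_le_signers _ _ auth).
Qed.

Lemma packet_ok_forged S (k d : 'I_n) x pr :
  (forall y, y \in x :: pr -> y.2 \in F \/ y \in S) -> packet_ok S (Packet k d x pr).
Proof.
move=> forged; suff : all (authentic S) (x :: pr) by [].
by apply/allP => y /forged [yF | yS]; apply/orP; [left | right].
Qed.

Lemma all_packet_ok_deliver S N n1 p n2 : N = n1 ++ p :: n2 ->
  all (packet_ok S) N -> packet_ok S p && all (packet_ok S) (n1 ++ n2).
Proof. by move=> ->; rewrite !all_cat /= => /and3P [-> -> ->]. Qed.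

Lemma invariant_step w w' : step t F prop w w' -> invariant w -> invariant w'.
Proof.
case=> {w w'}.
- move=> w i _ iF <- init I; have [auth _ dec] := procs_ok I i.
  by apply: invariant_sign => //; rewrite /next_sign_round init.
- move=> w i _ est pr iF <- begin coord [_ [pr_aux valid]] I.
  have [auth _ dec] := procs_ok I i.
  apply: invariant_sign => //=; first by rewrite /next_sign_round begin.
  - by rewrite /next_sign_round /= coord.
  - by move=> x /pr_aux /auth.
- move=> w i _ iF <- begin ncoord I; have [auth _ dec] := procs_ok I i.
  apply: invariant_local => //=; last exact: net_ok.
  by rewrite /next_sign_round begin /= (negbTE ncoord).
- move=> w i _ iF <- wait0 _ coord I; have [auth pos dec] := procs_ok I i.
  apply: invariant_local => //=; last exact: net_ok.
  - by split=> // _; apply: pos; rewrite /mid_round wait0.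
  - by rewrite /next_sign_round wait0 coord.
- move=> w i _ est pr iF <- wait0 _ ncoord [_ [pr_aux valid]] I.
  have [auth pos dec] := procs_ok I i.
  apply: invariant_sign => //=; first by rewrite /next_sign_round wait0 (negbTE ncoord).
  - by move=> x /pr_aux /auth.
  - by split=> // _; apply: pos; rewrite /mid_round wait0.
- move=> w i _ iF <- waitq _ I; have [auth pos dec] := procs_ok I i.
  apply: invariant_local => //=; last exact: net_ok.
  - by split=> // _; apply: pos; rewrite /mid_round waitq.
  - by rewrite /next_sign_round waitq.
- move=> w i _ iF <- wait1 _ b d I; have [auth _ _] := procs_ok I i.
  apply: invariant_local => //=; last exact: net_ok.
  - split=> //; apply: decision_ok_decide (procs_ok I i) _.
    by rewrite /mid_round wait1.
  - by rewrite /next_sign_round wait1.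
- move=> w i _ k <- _ I; have [auth pos dec] := procs_ok I i.
  by apply: invariant_local => //=; exact: net_ok.
- move=> w n1 n2 p _ S net_w dF <- _ S_pr _ A I; have [auth pos dec] := procs_ok I (dst p).
  case/andP: (all_packet_ok_deliver net_w (net_ok I)) => /andP [sig_ok prf_ok] rest.
  apply: invariant_local => //=; split=> // x /=.
  by rewrite in_cons mem_cat => /or3P [/eqP -> // | /S_pr /(allP prf_ok) | /auth].
- move=> w n1 n2 p _ net_w dF <- _ I; have [auth pos dec] := procs_ok I (dst p).
  case/andP: (all_packet_ok_deliver net_w (net_ok I)) => _ rest.
  exact: invariant_local.
- move=> w n1 n2 p net_w _ I; apply: invariant_net => //.
  by case/andP: (all_packet_ok_deliver net_w (net_ok I)).
- move=> w k d s pr _ forged I; apply: invariant_net => //.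
  by rewrite all_cat net_ok //= packet_ok_forged.
Qed.

Lemma reachable_invariant w : reachable t F prop w -> invariant w.
Proof. by elim=> [|w0 w1 _ I0 S]; [exact: invariant_init | exact: invariant_step S I0]. Qed.

End Invariant.

Theorem lemma3 (n t : nat) (F : {set 'I_n}) (prop : 'I_n -> bool) :
  3 * t < n -> #|F| <= t ->
  forall w : world n,
    reachable t F prop w ->
    forall (i j : 'I_n) (a b : bool),
      i \notin F -> j \notin F ->
      decided (procs w i) = Some a -> decided (procs w j) = Some b ->
      a = b.
Proof.
(* Faulty processes never run the algorithm, so they never decide and the
   invariant covers them as well. *)
move=> t_lt F_le w /reachable_invariant I i j a b _ _ dec_i dec_j.
have [r1 d1 ->] := decision_backed (procs_ok I i) dec_i.
have [r2 d2 ->] := decision_backed (procs_ok I j) dec_j.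
exact: (decisive_agree t_lt F_le (signed_uniq I) (signed_justified I) d1 d2).
Qed.
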